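(* Let $Y$ be a Young diagram with row lengths $a_1\ge a_2\ge\cdots\ge a_m\ge 0$ and size $|Y|=\sum_{i=1}^m a_i$. If $Y$ is wide, then $\tau^{(2)}(H(Y))=|Y|$.
   Context: A Young diagram with row lengths $a_1\ge\cdots\ge a_m\ge 0$ represents the partition $|Y|=a_1+\cdots+a_m$; its $i$th row $r_i$ has $a_i$ left-aligned squares. Its conjugate $Y'$ is the diagram whose row lengths are the column lengths $b_j=|\{i: a_i\ge j\}|$ of $Y$. A diagram $X$ dominates a diagram $Z$ of the same size if $\sum_{i=1}^k a_i(X)\ge \sum_{i=1}^k a_i(Z)$ for every $k\ge1$ (padding with zero parts). $Y$ is wide if for every subset of its rows, the Young diagram $Z$ formed by those rows dominates its conjugate $Z'$. The tripartite 3-uniform hypergraph $H(Y)$ has vertex sides $R=\{r_1,\dots,r_m\}$, $C=\{c_1,\dots,c_{a_1}\}$, $S=\{s_1,\dots,s_{a_1}\}$ and edge set $\bigcup_{i=1}^m H_i$, where $H_i=\{\{r_i,c_j,s_k\}: 1\le j,k\le a_i\}$. A 2-cover of a hypergraph $H$ is a set $P$ of 2-element vertex sets, each contained in some edge of $H$, such that every edge of $H$ contains some member of $P$; $\tau^{(2)}(H)$ is the minimum size of a 2-cover. *)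

From mathcomp Require Import all_boot.
Set Implicit Arguments. Unset Strict Implicit. Unset Printing Implicit Defensive.

Definition young (a : seq nat) : bool := sorted (fun x y => y <= x) a.

Definition ysize (a : seq nat) : nat := sumn a.

(* a_1 (= 0 for the empty diagram); for a Young diagram this is the max row length. *)
Definition width (a : seq nat) : nat := head 0 a.

Definition conjugate (a : seq nat) : seq nat :=
  [seq count (fun x => j.+1 <= x) a | j <- iota 0 (foldr maxn 0 a)].

(* X dominates Z (same size; partial sums, padding with zeros via take) *)
Definition dominates (X Z : seq nat) : Prop :=
  sumn X = sumn Z /\ forall k, 1 <= k -> sumn (take k Z) <= sumn (take k X).

Definition wide (a : seq nat) : Prop :=
  forall msk : bitseq, dominates (mask msk a) (conjugate (mask msk a)).

(* vertices of H(Y): R = 'I_m, C = 'I_n, S = 'I_n (0-based), n = a_1 *)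
Definition vert (m n : nat) : finType := (('I_m + 'I_n) + 'I_n)%type.

Definition rv {m n} (i : 'I_m) : vert m n := inl (inl i).
Definition cv {m n} (j : 'I_n) : vert m n := inl (inr j).
Definition sv {m n} (k : 'I_n) : vert m n := inr k.

(* H_i = {{r_i,c_j,s_k} : j,k <= a_i} (0-based: j,k < a_i) *)
Definition Hi (a : seq nat) (i : 'I_(size a)) : {set {set vert (size a) (width a)}} :=
  [set [set rv i; cv jk.1; sv jk.2] | jk in [set jk : 'I_(width a) * 'I_(width a)
     | (jk.1 < nth 0 a i) && (jk.2 < nth 0 a i)]].

Definition HY (a : seq nat) : {set {set vert (size a) (width a)}} :=
  \bigcup_(i < size a) Hi i.

Definition is_2cover (V : finType) (H : {set {set V}}) (P : {set {set V}}) : Prop :=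
  (forall p, p \in P -> #|p| = 2 /\ exists2 e, e \in H & p \subset e) /\
  (forall e, e \in H -> exists2 p, p \in P & p \subset e).

Definition tau2_is (V : finType) (H : {set {set V}}) (t : nat) : Prop :=
  (exists P, is_2cover H P /\ #|P| = t) /\
  (forall P, is_2cover H P -> t <= #|P|).

From mathcomp Require Import all_boot zify.
Set Implicit Arguments. Unset Strict Implicit. Unset Printing Implicit Defensive.

(* The pairs {r_i, c_j}, j <= a_i, form a 2-cover of size |Y|. Conversely, given a 2-cover P,
   let X_i and Y_i be the columns and symbols j, k <= a_i for which {r_i, c_j}, resp. {r_i,
   s_k}, is not in P. The triple {r_i, c_j, s_k} with j in X_i, k in Y_i can then only be
   covered by {c_j, s_k}, so the set Q of column-symbol pairs of P contains every X_i x Y_i, and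
   counting P row by row leaves to show sum_i (|X_i| + |Y_i| - a_i)_+ <= |Q|. This holds for any
   family with |X_i|, |Y_i| <= b_i and b wide, by induction on |Q| + #rows. Rows without excess
   are dropped. If some row has max(|X_i|, |Y_i|) >= #rows, deleting a point of its smaller side
   from every row removes at least #rows pairs of Q and at most one unit of excess per row.
   Otherwise the row w of least b_w is deleted and its excess is charged to the other rows by
   lowering their b; wideness of b guarantees room for this and survives the lowering. *)

Section Wideness.
Variable I : finType.
Implicit Types (A B X T : {set I}) (b c d : I -> nat).

(* [\sum_(i in X) minn (b i) k] is the sum of the first k parts of the conjugate of the rows X,
   so [wide] asks for k rows of X with at least that sum. *)
Definition top_dominates X b k :=
  exists2 T : {set I}, (T \subset X) && (#|T| <= k) &
    \sum_(i in X) minn (b i) k <= \sum_(i in T) b i.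

Definition wide_on A b := forall X, X \subset A -> forall k, top_dominates X b k.

Lemma wide_onS A B b : B \subset A -> wide_on A b -> wide_on B b.
Proof. by move=> sBA wideA X sXB; apply: wideA; apply: subset_trans sBA. Qed.

Lemma top_dominates_card X b k : #|X| <= k -> top_dominates X b k.
Proof.
by move=> Xk; exists X; rewrite ?subxx //; apply: leq_sum => i _; apply: geq_minl.
Qed.

Lemma leq_sum_subset T B c : T \subset B -> \sum_(i in T) c i <= \sum_(i in B) c i.
Proof. by move=> sTB; rewrite [leqRHS](big_setID T) /= (setIidPr sTB) leq_addr. Qed.

Lemma sum_minn_leq X c k : \sum_(i in X) minn (c i) k <= #|X| * k.
Proof. by rewrite -sum_nat_const; apply: leq_sum => i _; apply: geq_minr. Qed.

Lemma exists_heavy_subset T c k : k <= #|T| ->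
  exists2 T' : {set I}, (T' \subset T) && (#|T'| == k) &
    k * \sum_(i in T) c i <= #|T| * \sum_(i in T') c i.
Proof.
have [n] := ubnP #|T|; elim: n T => // n IHn T ltTn kT.
have [eqkT | ltkT] := eqVneq k #|T|.
  by exists T; rewrite ?subxx ?eqkT ?eqxx // mulnC.
have [u0 u0T] : {u0 | u0 \in T} by apply/sigW/card_gt0P; lia.
case: (arg_minnP (P := [in T]) c u0T) => u uT u_min.
have cardTu : #|T| = #|T :\ u|.+1 by move: (cardsD1 u T); rewrite uT.
have [||T' /andP[sT' /eqP cardT'] avg] := IHn (T :\ u); try lia.
exists T'; first by rewrite (subset_trans sT') ?subD1set ?cardT' /=.
have light_u : k * c u <= \sum_(i in T') c i.
  rewrite -cardT' -sum_nat_const; apply: leq_sum => i /(subsetP sT').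
  by rewrite in_setD1 => /andP[_ /u_min].
rewrite (big_setD1 u uT) /= cardTu; nia.
Qed.

Lemma swap_out_min b X T0 w K :
  w \notin X -> (forall x, x \in X -> b w <= b x) ->
  T0 \subset w |: X -> #|T0| <= K -> K <= #|X| ->
  exists2 T : {set I}, (T \subset X) && (#|T| <= K) & \sum_(i in T0) b i <= \sum_(i in T) b i.
Proof.
move=> wX bw_min sT0 cardT0 KX.
have sT0w : T0 :\ w \subset X.
  by apply/subsetP => x /setD1P[xw /(subsetP sT0)]; rewrite in_setU1 (negbTE xw).
have [wT0 | wT0] := boolP (w \in T0); last first.
  exists T0; rewrite ?cardT0 ?andbT //; apply/subsetP => x xT0.
  by apply: (subsetP sT0w); rewrite in_setD1 xT0 andbT; apply: contraNneq wT0 => <-.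
have cardT0w : #|T0 :\ w| < K by move: (cardsD1 w T0); rewrite wT0; lia.
have [t tX tT0w] : exists2 t, t \in X & t \notin T0 :\ w.
  by apply/subsetPn; apply: contraTN cardT0w => /subset_leq_card; lia.
exists (t |: (T0 :\ w)).
  by rewrite subUset sub1set tX sT0w cardsU1 tT0w /=.
by rewrite (big_setD1 w wT0) big_setU1 //= leq_add2r bw_min.
Qed.

Section ReduceMinRow.
Variables (A : {set I}) (b d : I -> nat) (w : I).
Hypotheses (wideA : wide_on A b) (wA : w \in A).
Hypotheses (bw_min : forall l, l \in A -> b w <= b l) (d_le_b : forall l, d l <= b l).
Hypothesis sum_d_le : \sum_(l in A :\ w) d l <= b w.

Let c l := b l - d l.

Section AtSubset.
Variables (X : {set I}) (k : nat).
Hypothesis sXA : X \subset A :\ w.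

Let wX : w \notin X.
Proof. by apply: contraTN sXA => wX; apply/subsetPn; exists w; rewrite ?setD11. Qed.

Let wXA : w |: X \subset A.
Proof. by rewrite subUset sub1set wA (subset_trans sXA) ?subD1set. Qed.

Let bw_minX x : x \in X -> b w <= b x.
Proof. by move=> /(subsetP sXA) /setD1P[_ /bw_min]. Qed.

Let sum_d_subset T : T \subset X -> \sum_(i in T) d i <= b w.
Proof. by move=> sTX; apply: leq_trans sum_d_le; apply/leq_sum_subset/(subset_trans sTX). Qed.

Let sum_c T : \sum_(i in T) c i + \sum_(i in T) d i = \sum_(i in T) b i.
Proof. by rewrite -big_split; apply: eq_bigr => i _; rewrite /= /c subnK. Qed.

Lemma top_dominates_reduce_small_min : b w <= k -> k <= #|X| -> top_dominates X c k.
Proof.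
move=> bwk kX; have [T0 /andP[sT0 cardT0] domT0] := wideA wXA k.
have [T /andP[sTX cardT] leT] := swap_out_min wX bw_minX sT0 cardT0 kX.
exists T; first by rewrite sTX cardT.
have minc_le_minb : \sum_(i in X) minn (c i) k <= \sum_(i in X) minn (b i) k.
  by apply: leq_sum => i _; rewrite /c; lia.
move: domT0; rewrite big_setU1 //= (minn_idPl bwk).
have := sum_c T; have := sum_d_subset sTX; lia.
Qed.

Lemma top_dominates_reduce_mid_min : k < b w -> b w <= #|X| -> top_dominates X c k.
Proof.
move=> kbw bwX; have [T0 /andP[sT0 cardT0] domT0] := wideA wXA (b w).
have [T /andP[sTX cardT] leT] := swap_out_min wX bw_minX sT0 cardT0 bwX.
have heavyT : #|X| * b w <= \sum_(i in T) c i.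
  have sum_minX : \sum_(i in X) minn (b i) (b w) = #|X| * b w.
    by rewrite -sum_nat_const; apply: eq_bigr => i /bw_minX /minn_idPr.
  move: domT0; rewrite big_setU1 //= minnn sum_minX.
  have := sum_c T; have := sum_d_subset sTX; lia.
have [Tk | kT] := leqP #|T| k.
  exists T; first by rewrite sTX Tk.
  apply: leq_trans (sum_minn_leq X c k) (leq_trans _ heavyT).
  by rewrite leq_mul2l ltnW ?orbT.
have [T' /andP[sT' /eqP cardT'] avg] := exists_heavy_subset c (ltnW kT).
exists T'; first by rewrite (subset_trans sT') // cardT' /=.
apply: leq_trans (sum_minn_leq X c k) _.
have h1 : k * (#|X| * b w) <= k * \sum_(i in T) c i by rewrite leq_mul2l heavyT orbT.
have h2 : #|T| * \sum_(i in T') c i <= b w * \sum_(i in T') c i.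
  by rewrite leq_mul2r cardT orbT.
rewrite -(@leq_pmul2l (b w)); last lia.
apply: leq_trans (leq_trans avg h2); apply: leq_trans h1; nia.
Qed.

Lemma top_dominates_reduce_large_min : k < #|X| -> #|X| < b w -> top_dominates X c k.
Proof.
move=> kX Xbw; have [T' /andP[sT' /eqP cardT'] avg] := exists_heavy_subset c (ltnW kX).
exists T'; first by rewrite sT' cardT' /=.
apply: leq_trans (sum_minn_leq X c k) _.
have heavyX : #|X| * b w <= \sum_(i in X) b i.
  by rewrite -sum_nat_const; apply: leq_sum => i /bw_minX.
have heavy_cX : (#|X| - 1) * b w <= \sum_(i in X) c i.
  by rewrite mulnBl mul1n; have := sum_c X; have := sum_d_subset (subxx X); lia.
move: avg heavy_cX; set sc := \sum_(i in X) c i; set sc' := \sum_(i in T') c i; nia.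
Qed.

End AtSubset.

Lemma wide_on_reduce_min : wide_on (A :\ w) c.
Proof.
move=> X sXA k; have [Xk | kX] := leqP #|X| k; first exact: top_dominates_card.
have [bwk | kbw] := leqP (b w) k; first exact: top_dominates_reduce_small_min (ltnW kX).
have [bwX | Xbw] := leqP (b w) #|X|; first exact: top_dominates_reduce_mid_min.
exact: top_dominates_reduce_large_min.
Qed.

End ReduceMinRow.

End Wideness.

Lemma exists_bounded_summands (I : finType) (T : {set I}) (cap : I -> nat) t :
  t <= \sum_(i in T) cap i ->
  exists2 d : I -> nat, (forall i, d i <= cap i) & \sum_(i in T) d i = t.
Proof.
elim: t => [|t IHt] le_t; first by exists (fun=> 0); rewrite ?big1.
have [d d_cap sum_d] := IHt (ltnW le_t).
have [l lT dl] : exists2 l, l \in T & d l < cap l.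
  apply/exists_inP; apply: contraTT le_t => /exists_inPn d_full; rewrite -ltnNge -sum_d.
  by apply: leq_sum => i /d_full; rewrite -leqNgt.
exists (fun i => d i + (i == l)) => [i | ].
  by case: eqP => [->|_]; rewrite ?addn0 ?addn1.
rewrite big_split /= sum_d (big_setD1 l lT) eqxx big1 ?addn0 ?addn1 //.
by move=> i /setD1P[/negbTE ->].
Qed.

Section RectangleBound.
Variables I V : finType.
Implicit Types (A : {set I}) (b : I -> nat) (X Y : I -> {set V}) (Q : {set V * V}).

Definition rect_family A b X Y Q :=
  [/\ forall l, l \in A -> maxn #|X l| #|Y l| <= b l,
      forall l, l \in A -> setX (X l) (Y l) \subset Q & wide_on A b].

(* Truncated subtraction: each row contributes the positive part of its excess. *)
Definition excess A b X Y := \sum_(l in A) (#|X l| + #|Y l| - b l).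

Definition transpose Q := [set (p.2, p.1) | p in Q].

Lemma card_transpose Q : #|transpose Q| = #|Q|.
Proof. by rewrite card_imset // => -[? ?] [? ?] [-> ->]. Qed.

Lemma rect_family_transpose A b X Y Q :
  rect_family A b X Y Q -> rect_family A b Y X (transpose Q).
Proof.
case=> sizeQ coverQ wideA; split=> // [l /sizeQ | l /coverQ /subsetP coverl].
  by rewrite maxnC.
apply/subsetP => -[k j] /setXP[kY jX]; apply/imsetP; exists (j, k) => //.
by apply: coverl; rewrite in_setX jX kY.
Qed.

Lemma excessC A b X Y : excess A b X Y = excess A b Y X.
Proof. by apply: eq_bigr => l _; rewrite addnC. Qed.

Definition excess_bound_below n := forall A b X Y Q,
  rect_family A b X Y Q -> #|Q| + #|A| < n -> excess A b X Y <= #|Q|.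

Section InductionStep.
Variables (A : {set I}) (b : I -> nat) (X Y : I -> {set V}) (Q : {set V * V}).
Hypothesis famQ : rect_family A b X Y Q.
Hypothesis IH : excess_bound_below (#|Q| + #|A|).

Lemma excess_drop_row l0 : l0 \in A -> #|X l0| + #|Y l0| <= b l0 -> excess A b X Y <= #|Q|.
Proof.
move=> l0A no_excess; have [sizeQ coverQ wideA] := famQ.
rewrite /excess (big_setD1 l0 l0A) /= (_ : _ - _ = 0) ?add0n; last lia.
apply: IH; last by move: (cardsD1 l0 A); rewrite l0A; lia.
split=> [l /setD1P[_ /sizeQ] | l /setD1P[_ /coverQ] |] //.
exact: wide_onS (subD1set A l0) wideA.
Qed.

Lemma excess_peel_column l0 j :
  l0 \in A -> j \in X l0 -> #|A| <= #|Y l0| -> excess A b X Y <= #|Q|.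
Proof.
move=> l0A jX AY; have [sizeQ coverQ wideA] := famQ.
pose col := [set p : V * V | p.1 == j].
have Y_col : #|Y l0| <= #|Q :&: col|.
  rewrite -(card_imset _ (fun k k' => @f_equal _ _ snd (j, k) (j, k'))).
  apply/subset_leq_card/subsetP => _ /imsetP[k kY ->].
  by rewrite !inE eqxx andbT (subsetP (coverQ l0 l0A)) // in_setX jX kY.
have famQ' : rect_family A b (fun l => X l :\ j) Y (Q :\: col).
  split=> // [l lA | l lA].
    by have := sizeQ l lA; have := subset_leq_card (subD1set (X l) j); lia.
  apply/subsetP => -[j' k] /setXP[/setD1P[j'j j'X] kY].
  by rewrite !inE /= j'j (subsetP (coverQ l lA)) // in_setX j'X kY.
have excess_peel : excess A b X Y <= excess A b (fun l => X l :\ j) Y + #|A|.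
  rewrite /excess -sum1_card -big_split /=; apply: leq_sum => l _.
  by have := cardsD1 j (X l); lia.
have cardQ : #|Q :&: col| + #|Q :\: col| = #|Q| by rewrite cardsID.
have A_gt0 : 0 < #|A| by apply/card_gt0P; exists l0.
have : excess A b (fun l => X l :\ j) Y <= #|Q :\: col|.
  by apply: IH famQ' _; lia.
lia.
Qed.

(* Wideness at [k = M], with [w] swapped out of the optimal rows, gives the other rows
   enough room below [b] to absorb the excess of [w]. *)
Lemma min_row_excess_le_slack M w :
  (forall l, l \in A -> maxn #|X l| #|Y l| <= M) -> M < #|A| ->
  w \in A -> (forall l, l \in A -> b w <= b l) ->
  #|X w| + #|Y w| - b w <= \sum_(l in A :\ w) (b l - maxn #|X l| #|Y l|).
Proof.
move=> le_M ltMA wA bw_min; have [sizeQ _ wideA] := famQ.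
have [T0 /andP[sT0 cardT0] domT0] := wideA A (subxx A) M.
have [||||T /andP[sT _] leT] := swap_out_min (X := A :\ w) (w := w) (b := b) _ _ _ cardT0.
- by rewrite setD11.
- by move=> x /setD1P[_ /bw_min].
- by rewrite setD1K.
- by move: (cardsD1 w A); rewrite wA; lia.
have slack : \sum_(l in A :\ w) (b l - minn (b l) M)
             <= \sum_(l in A :\ w) (b l - maxn #|X l| #|Y l|).
  by apply: leq_sum => l /setD1P[_ lA]; have := sizeQ l lA; have := le_M l lA; lia.
have split_min : \sum_(l in A :\ w) (b l - minn (b l) M) + \sum_(l in A :\ w) minn (b l) M
                 = \sum_(l in A :\ w) b l.
  by rewrite -big_split; apply: eq_bigr => l _; rewrite /= subnK ?geq_minl.
move: domT0; rewrite (big_setD1 w wA) /=.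
have := leq_sum_subset b sT; have := sizeQ w wA; have := le_M w wA; lia.
Qed.

Lemma excess_reduce_min_row M :
  (forall l, l \in A -> maxn #|X l| #|Y l| <= M) -> M < #|A| ->
  (forall l, l \in A -> b l < #|X l| + #|Y l|) -> excess A b X Y <= #|Q|.
Proof.
move=> le_M ltMA pos; have [sizeQ coverQ wideA] := famQ.
have [w0 w0A] : {w0 | w0 \in A} by apply/sigW/card_gt0P; lia.
case: (arg_minnP (P := [in A]) b w0A) => w wA bw_min.
have [d d_cap sum_d] := exists_bounded_summands (min_row_excess_le_slack le_M ltMA wA bw_min).
have famQ' : rect_family (A :\ w) (fun l => b l - d l) X Y Q.
  split=> [l /setD1P[_ lA] | l /setD1P[_ /coverQ] //|].
    by have := sizeQ l lA; have := d_cap l; lia.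
  apply: wide_on_reduce_min => // [l | ]; first by have := d_cap l; lia.
  by rewrite sum_d; have := sizeQ w wA; lia.
apply: leq_trans (IH famQ' _); last by move: (cardsD1 w A); rewrite wA; lia.
rewrite /excess (big_setD1 w wA) /= -sum_d -big_split leq_sum // => l /setD1P[_ lA] /=.
by have := pos l lA; have := d_cap l; lia.
Qed.

End InductionStep.

Lemma excess_peel_max_row A b X Y Q l0 :
  rect_family A b X Y Q -> excess_bound_below (#|Q| + #|A|) ->
  l0 \in A -> b l0 < #|X l0| + #|Y l0| -> #|A| <= maxn #|X l0| #|Y l0| ->
  excess A b X Y <= #|Q|.
Proof.
move=> famQ IH l0A pos0 AM; have [sizeQ _ _] := famQ.
have := sizeQ l0 l0A; rewrite geq_max => /andP[Xb Yb].
have [XY | YX] := leqP #|X l0| #|Y l0|.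
  have [j jX] : {j | j \in X l0} by apply/sigW/card_gt0P; lia.
  by apply: (excess_peel_column famQ IH l0A jX); lia.
have [k kY] : {k | k \in Y l0} by apply/sigW/card_gt0P; lia.
rewrite excessC -card_transpose.
apply: (excess_peel_column (rect_family_transpose famQ) _ l0A kY); last lia.
by move=> A' b' X' Y' Q' famQ'; rewrite card_transpose; apply: IH.
Qed.

Theorem excess_leq_card A b X Y Q : rect_family A b X Y Q -> excess A b X Y <= #|Q|.
Proof.
have [n] := ubnP (#|Q| + #|A|); elim: n => // n IHn in A b X Y Q * => lt_n famQ.
have IH : excess_bound_below (#|Q| + #|A|).
  by move=> A' b' X' Y' Q' famQ' lt'; apply: IHn famQ'; lia.
have [l0 /andP[l0A no_excess] | pos] := pickP [pred l in A | #|X l| + #|Y l| <= b l].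
  exact (excess_drop_row famQ IH l0A no_excess).
have {}pos l : l \in A -> b l < #|X l| + #|Y l|.
  by move=> lA; move/negbT: (pos l); rewrite /= lA -ltnNge.
have [-> | [l1 l1A]] := set_0Vmem A; first by rewrite /excess big_set0.
pose M := \max_(l in A) maxn #|X l| #|Y l|.
have le_M l : l \in A -> maxn #|X l| #|Y l| <= M by apply: leq_bigmax_cond.
have [MA | ltMA] := leqP #|A| M; last exact (excess_reduce_min_row famQ IH le_M ltMA pos).
have A_gt0 : 0 < #|A| by apply/card_gt0P; exists l1.
have [l0 l0A eqM] := eq_bigmax_cond (fun l => maxn #|X l| #|Y l|) A_gt0.
by apply: excess_peel_max_row famQ IH l0A (pos l0 l0A) _; rewrite -eqM.
Qed.

End RectangleBound.

Lemma leq_foldr_maxn (s : seq nat) x : x \in s -> x <= foldr maxn 0 s.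
Proof.
elim: s => //= y s IHs; rewrite in_cons => /predU1P[-> | /IHs]; first exact: leq_maxl.
by move/leq_trans; apply; apply: leq_maxr.
Qed.

Lemma sum_ltn_nat n z : \sum_(0 <= j < n) (j < z) = minn z n.
Proof.
elim: n => [|n IHn]; first by rewrite big_geq.
by rewrite big_nat_recr //= IHn; lia.
Qed.

Lemma sumn_take_conjugate (s : seq nat) k :
  sumn (take k (conjugate s)) = \sum_(z <- s) minn z k.
Proof.
rewrite /conjugate -map_take take_iota sumnE big_map.
under eq_bigr => j _ do rewrite -sum1_count big_mkcond /=.
rewrite exchange_big /= [LHS]big_seq [RHS]big_seq; apply: eq_bigr => z /leq_foldr_maxn z_le.
under eq_bigr => j _ do rewrite (_ : (if j.+1 <= z then 1 else 0) = (j < z)) //.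
by rewrite -[minn k _]subn0 sum_ltn_nat; lia.
Qed.

Lemma wide_on_rows (a : seq nat) :
  wide a -> wide_on [set: 'I_(size a)] (fun i => nth 0 a i).
Proof.
move=> wide_a X _ [|k].
  by exists set0; rewrite ?sub0set ?cards0 // big1 // => i _; rewrite minn0.
set f := fun i : 'I_(size a) => nth 0 a i.
pose msk := [seq i \in X | i <- enum 'I_(size a)].
have mask_rows : mask msk a = [seq f i | i <- enum X].
  have {1}-> : a = [seq f i | i <- enum 'I_(size a)].
    by rewrite -[LHS](mkseq_nth 0) /mkseq -val_enum_ord -map_comp.
  by rewrite -map_mask -filter_mask enumT.
have [_ /(_ k.+1 isT)] := wide_a msk.
rewrite sumn_take_conjugate mask_rows -map_take sumnE !big_map big_enum /=.
set s := take k.+1 (enum X); have s_uniq : uniq s by rewrite take_uniq ?enum_uniq.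
move=> dom_s; exists [set i in s].
  rewrite cardsE (card_uniqP s_uniq) size_take_min geq_minl andbT.
  by apply/subsetP => i; rewrite inE => /mem_take; rewrite mem_enum.
by rewrite (big_uniq _ s_uniq) in dom_s; rewrite (eq_bigl _ _ (in_set _)).
Qed.

Lemma nth_leq_width (a : seq nat) i : young a -> nth 0 a i <= width a.
Proof.
case: a => [|x s] young_a; first by rewrite nth_nil.
have [lt_i | le_i] := ltnP i (size (x :: s)); last by rewrite nth_default.
have le_nth := sorted_leq_nth (leT := fun x y => y <= x)
  (fun _ _ _ h1 h2 => leq_trans h2 h1) (fun x => leqnn x) 0 young_a.
exact: (le_nth 0 i).
Qed.

Definition row_cells (a : seq nat) (i : 'I_(size a)) := [set j : 'I_(width a) | j < nth 0 a i].

Lemma card_row_cells (a : seq nat) (i : 'I_(size a)) : young a -> #|row_cells i| = nth 0 a i.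
Proof.
move/(nth_leq_width i) => le_width; rewrite -sum1_card big_mkcond /=.
rewrite -[in RHS](minn_idPl le_width) -sum_ltn_nat big_mkord.
by apply: eq_bigr => j _; rewrite inE; case: ltnP.
Qed.

Lemma set2_sub3 (T : finType) (x y z : T) (p : {set T}) :
  p \subset [set x; y; z] -> #|p| = 2 ->
  [\/ p = [set x; y], p = [set x; z] | p = [set y; z]].
Proof.
move=> /subsetP sub_p /eqP/cards2P[u [v [neq_uv p_uv]]]; subst p.
move: (sub_p u (set21 u v)) (sub_p v (set22 u v)); rewrite !inE -!orbA.
move=> /or3P[] /eqP eq_u /or3P[] /eqP eq_v; subst u v; rewrite ?eqxx // in neq_uv.
all: rewrite ?[[set y; x]]setUC ?[[set z; x]]setUC ?[[set z; y]]setUC.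
all: first [by apply: Or31 | by apply: Or32 | by apply: Or33].
Qed.

Section TwoSets.
Variables m n : nat.
Local Notation V := (vert m n).
Implicit Types (P : {set {set V}}) (i : 'I_m).

Definition vpair (z : 'I_m * 'I_n + 'I_m * 'I_n + 'I_n * 'I_n) : {set V} :=
  match z with
  | inl (inl (i, j)) => [set rv i; cv j]
  | inl (inr (i, k)) => [set rv i; sv k]
  | inr (j, k) => [set cv j; sv k]
  end.

Lemma vpair_inj : injective vpair.
Proof.
move=> [[[i j]|[i j]]|[i j]] [[[i' j']|[i' j']]|[i' j']] /setP eq_pairs;
  rewrite /vpair /= in eq_pairs.
- move: (eq_pairs (rv i)) (eq_pairs (cv j)); rewrite !inE !eqxx /= !orbF.
  by move=> /esym/eqP[->] /esym/eqP[->].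
- by move: (eq_pairs (cv j)); rewrite !inE !eqxx.
- by move: (eq_pairs (rv i)); rewrite !inE !eqxx.
- by move: (eq_pairs (sv j)); rewrite !inE !eqxx.
- move: (eq_pairs (rv i)) (eq_pairs (sv j)); rewrite !inE !eqxx /= !orbF.
  by move=> /esym/eqP[->] /esym/eqP[->].
- by move: (eq_pairs (rv i)); rewrite !inE !eqxx.
- by move: (eq_pairs (sv j)); rewrite !inE !eqxx.
- by move: (eq_pairs (cv i)); rewrite !inE !eqxx.
- move: (eq_pairs (cv i)) (eq_pairs (sv j)); rewrite !inE !eqxx /= ?orbF.
  by move=> /esym/eqP[->] /esym/eqP[->].
Qed.

Definition row_col_links P i := [set j | [set rv i; cv j] \in P].
Definition row_sym_links P i := [set k | [set rv i; sv k] \in P].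
Definition col_sym_links P := [set jk : 'I_n * 'I_n | [set cv jk.1; sv jk.2] \in P].

Lemma card_sigma_set (F : 'I_m -> {set 'I_n}) :
  #|[set p : 'I_m * 'I_n | p.2 \in F p.1]| = \sum_i #|F i|.
Proof.
rewrite -sum1_card (eq_bigl (fun p => p.2 \in F p.1)) => [|p]; last by rewrite inE.
rewrite -(pair_big_dep xpredT (fun i j => j \in F i) (fun _ _ => 1)) /=.
by apply: eq_bigr => i _; rewrite sum1_card.
Qed.

Lemma card_links_leq P :
  \sum_i #|row_col_links P i| + \sum_i #|row_sym_links P i| + #|col_sym_links P| <= #|P|.
Proof.
have <- : #|vpair @^-1: P|
          = \sum_i #|row_col_links P i| + \sum_i #|row_sym_links P i| + #|col_sym_links P|.
  rewrite -!card_sigma_set -!sum1_card !big_sumType /=.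
  by congr (_ + _ + _); apply: eq_bigl => -[x y]; rewrite !inE.
rewrite -(card_imset (vpair @^-1: P) vpair_inj).
by apply/subset_leq_card/subsetP => _ /imsetP[z /[!inE] Pz ->].
Qed.

End TwoSets.

Lemma sumn_nth (a : seq nat) : sumn a = \sum_(i < size a) nth 0 a i.
Proof. by rewrite sumnE (big_nth 0) big_mkord. Qed.

Lemma triple_in_HY (a : seq nat) (i : 'I_(size a)) j k :
  j \in row_cells i -> k \in row_cells i -> [set rv i; cv j; sv k] \in HY a.
Proof.
rewrite !inE => ji ki; apply/bigcupP; exists i => //.
by apply/imsetP; exists (j, k); rewrite ?inE ?ji.
Qed.

Lemma tau2_lower_bound (a : seq nat) P :
  young a -> wide a -> is_2cover (HY a) P -> ysize a <= #|P|.
Proof.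
move=> young_a wide_a [P_pairs P_covers].
pose b (i : 'I_(size a)) := nth 0 a i.
have card_cells i : #|row_cells i| = b i by apply: card_row_cells.
pose X i := row_cells i :\: row_col_links P i.
pose Y i := row_cells i :\: row_sym_links P i.
have famQ : rect_family [set: 'I_(size a)] b X Y (col_sym_links P).
  split=> [i _ | i _ | ]; last exact: wide_on_rows.
    by rewrite geq_max -!card_cells !subset_leq_card ?subsetDl.
  apply/subsetP => -[j k] /setXP[/setDP[j_cell jPA] /setDP[k_cell kPB]].
  have [p Pp sub_p] := P_covers _ (triple_in_HY j_cell k_cell).
  have [card_p _] := P_pairs p Pp.
  case: (set2_sub3 sub_p card_p) => eq_p; rewrite eq_p in Pp.
  - by rewrite inE Pp in jPA.
  - by rewrite inE Pp in kPB.
  - by rewrite inE.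
have row_le i :
    b i <= #|row_col_links P i| + #|row_sym_links P i| + (#|X i| + #|Y i| - b i).
  have := cardsID (row_col_links P i) (row_cells i).
  have := cardsID (row_sym_links P i) (row_cells i).
  have := subset_leq_card (subsetIr (row_cells i) (row_col_links P i)).
  have := subset_leq_card (subsetIr (row_cells i) (row_sym_links P i)).
  by rewrite /X /Y card_cells; lia.
apply: leq_trans _ (card_links_leq P); rewrite /ysize sumn_nth.
apply: leq_trans (leq_sum _ (fun i _ => row_le i)) _.
rewrite !big_split /= leq_add2l.
by have := excess_leq_card famQ; rewrite /excess (eq_bigl _ _ (@in_setT _)).
Qed.

Lemma tau2_upper_bound (a : seq nat) :
  young a -> exists P, is_2cover (HY a) P /\ #|P| = ysize a.
Proof.
move=> young_a.
pose D := [set p : 'I_(size a) * 'I_(width a) | p.2 \in row_cells p.1].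
exists [set vpair (inl (inl p)) | p in D]; split; last first.
  rewrite card_imset => [|p q /vpair_inj [] //].
  rewrite (card_sigma_set (@row_cells a)) /ysize sumn_nth.
  by apply: eq_bigr => i _; apply: card_row_cells.
split=> [_ /imsetP[[i j] + ->] | _ /bigcupP[i _ /imsetP[[j k] + ->]]]; rewrite inE /=.
  move=> j_cell; split; first by rewrite cards2.
  exists [set rv i; cv j; sv j]; first exact: triple_in_HY.
  by apply/subsetP => v; rewrite !inE => /orP[] ->; rewrite ?orbT.
move=> /andP[j_cell _]; exists [set rv i; cv j].
  by apply/imsetP; exists (i, j); rewrite ?inE.
by apply/subsetP => v; rewrite !inE => /orP[] ->; rewrite ?orbT.
Qed.

Theorem theorem2 (a : seq nat) :
  young a -> wide a -> tau2_is (HY a) (ysize a).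
Proof.
move=> young_a wide_a; split; first exact: tau2_upper_bound.
by move=> P; apply: tau2_lower_bound.
Qed.
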